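(* Let $I$ be a 1-absorbing primary hyperideal of $R$ that is not a primary hyperideal of $R$. Then $R$ is a local multiplicative hyperring.
   Context: Throughout, $R$ is a commutative multiplicative hyperring ($(R,+)$ abelian group, $\circ$ a commutative associative hyperoperation into nonempty subsets, $a\circ(b+c)\subseteq a\circ b+a\circ c$, $a\circ(-b)=(-a)\circ b=-(a\circ b)$; $A\circ B=\bigcup a\circ b$), with identity $1$ ($a\in a\circ 1$); $x$ is a unit if $1\in x\circ y$ for some $y$. All hyperideals are $\mathbf{C}$-hyperideals (for any finite product $A=r_1\circ\cdots\circ r_n$, $A\cap I\neq\emptyset\Rightarrow A\subseteq I$). $\sqrt I=\{r:r^n\subseteq I\text{ for some }n\}$. Primary hyperideal: nonzero proper $Q$ with $x\circ y\subseteq Q\Rightarrow x\in Q$ or $y\in\sqrt Q$. 1-absorbing primary hyperideal: proper $I$ such that for all nonunit $x,y,z$, $x\circ y\circ z\subseteq I$ implies $x\circ y\subseteq I$ or $z\in\sqrt I$. $R$ is local if it has a unique maximal hyperideal. *)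

From mathcomp Require Import all_boot all_algebra.
Set Implicit Arguments. Unset Strict Implicit. Unset Printing Implicit Defensive.
Import GRing.Theory.
Local Open Scope ring_scope.

Section Hyper.
Variable R : zmodType.

Definition hsub (A B : R -> Prop) : Prop := forall z, A z -> B z.
Definition hseteq (A B : R -> Prop) : Prop := forall z, A z <-> B z.
Definition hsing (x : R) : R -> Prop := fun z => z = x.
Definition hsadd (A B : R -> Prop) : R -> Prop :=
  fun z => exists a b, A a /\ B b /\ z = a + b.
Definition hsopp (A : R -> Prop) : R -> Prop := fun z => A (- z).

Variable hm : R -> R -> (R -> Prop).
Variable one : R.

Definition hsmul (A B : R -> Prop) : R -> Prop :=
  fun z => exists a b, A a /\ B b /\ hm a b z.

Definition hprod (r : R) (rs : seq R) : R -> Prop :=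
  foldl (fun A x => hsmul A (hsing x)) (hsing r) rs.

(* r^(n+1) *)
Definition hpow (r : R) (n : nat) : R -> Prop := hprod r (nseq n r).

Record mhyperring : Prop := {
  hm_nonempty : forall a b, exists z, hm a b z;
  hm_comm : forall a b, hseteq (hm a b) (hm b a);
  hm_assoc : forall a b c,
     hseteq (hsmul (hm a b) (hsing c)) (hsmul (hsing a) (hm b c));
  hm_distr : forall a b c, hsub (hm a (b + c)) (hsadd (hm a b) (hm a c));
  hm_oppr : forall a b, hseteq (hm a (- b)) (hsopp (hm a b));
  hm_oppl : forall a b, hseteq (hm (- a) b) (hsopp (hm a b));
  hm_one : forall a, hm a one a
}.

Definition hunit (x : R) : Prop := exists y, hm x y one.

(* hyperideals; by the standing convention every hyperideal is a C-hyperideal *)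
Definition hyperideal (I : R -> Prop) : Prop :=
  [/\ I 0,
      (forall a b, I a -> I b -> I (a - b)),
      (forall r a, I a -> hsub (hm r a) I) &
      (forall r rs, (exists z, hprod r rs z /\ I z) -> hsub (hprod r rs) I)].

Definition hproper (I : R -> Prop) : Prop := exists x, ~ I x.

Definition hrad (I : R -> Prop) : R -> Prop :=
  fun r => exists n, hsub (hpow r n) I.

Definition primary_cond (Q : R -> Prop) : Prop :=
  forall x y, hsub (hm x y) Q -> Q x \/ hrad Q y.
Definition primary_hyperideal (Q : R -> Prop) : Prop :=
  [/\ hyperideal Q, (exists x, Q x /\ x <> 0), hproper Q & primary_cond Q].

Definition one_absorbing_primary (I : R -> Prop) : Prop :=
  [/\ hyperideal I, hproper I &
      forall x y z, ~ hunit x -> ~ hunit y -> ~ hunit z ->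
        hsub (hprod x [:: y; z]) I -> hsub (hm x y) I \/ hrad I z].

Definition maximal_hyperideal (M : R -> Prop) : Prop :=
  [/\ hyperideal M, hproper M &
      forall J, hyperideal J -> hproper J -> hsub M J -> hsub J M].

Definition hlocal : Prop :=
  exists M, maximal_hyperideal M /\
    forall N, maximal_hyperideal N -> hseteq N M.

End Hyper.

From mathcomp Require Import all_boot all_algebra.
From Stdlib Require Import Classical.
Import GRing.Theory.
Local Open Scope ring_scope.
Set Implicit Arguments.
Unset Strict Implicit.

(* Since I is not primary, there are a, b with a o b in I, a not in I and
   b not in rad I.  Feeding c o a o b (c a nonunit) to the 1-absorbing
   condition yields c o a in I for EVERY nonunit c.  This "annihilation"
   property makes the set of nonunits a hyperideal: if c - d were a unit for
   nonunits c, d, distributivity would put (c - d) o a inside I, and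
   cancelling the unit would put a in I.  Finally, whenever the nonunits form
   a hyperideal, it is the unique maximal hyperideal, since a proper
   hyperideal contains no unit. *)

Section MultiplicativeHyperring.
Variables (R : zmodType) (hm : R -> R -> (R -> Prop)) (one : R).
Hypothesis HR : mhyperring hm one.

Definition nonunit (x : R) : Prop := ~ hunit hm one x.

(* A proper hyperideal contains no unit: with u in J, also 1 in u o y lies
   in J, hence every x in x o 1 does. *)
Lemma proper_hyperideal_no_unit (J : R -> Prop) (u : R) :
  hyperideal hm J -> hproper J -> hunit hm one u -> ~ J u.
Proof.
move=> [_ _ Jmul _] [x Jx] [y uy1] Ju; apply: Jx.
have J1 : J one by apply: (Jmul y u Ju); apply/(hm_comm HR).
exact: (Jmul x one J1 x (hm_one HR x)).
Qed.

(* Units cancel inside hyperideals: if u is a unit and u o b lies in I,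
   then b lies in I, because b is in b o 1 with 1 in u o y. *)
Lemma unit_cancel (I : R -> Prop) (u b : R) :
  hyperideal hm I -> hunit hm one u -> hsub (hm u b) I -> I b.
Proof.
move=> [_ _ Imul _] [y uy1] ubI.
have : hsmul hm (hsing b) (hm u y) b by exists b, one; do !split=> //; exact: (hm_one HR).
move/(hm_assoc HR b u y) => [w [v [bu_w [-> wy_b]]]].
have Iw : I w by apply: ubI; apply/(hm_comm HR).
by apply: (Imul y w Iw); apply/(hm_comm HR).
Qed.

(* A factor of a unit is a unit: if z in r o x has z o y containing 1,
   then 1 lies in x o v for some v in r o y. *)
Lemma unit_factor (r x z : R) :
  hm r x z -> hunit hm one z -> hunit hm one x.
Proof.
move=> rxz [y zy1].
have : hsmul hm (hm x r) (hsing y) one.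
  by exists z, y; split=> //; apply/(hm_comm HR).
by move/(hm_assoc HR x r y) => [_ [v [-> [_ xv1]]]]; exists v.
Qed.

Lemma hprod_rcons (r : R) (rs : seq R) (a : R) :
  hprod hm r (rcons rs a) = hsmul hm (hprod hm r rs) (hsing a).
Proof. by rewrite /hprod foldl_rcons. Qed.

(* Locality criterion: if the nonunits form a hyperideal, it is the unique
   maximal hyperideal, since every proper hyperideal consists of nonunits. *)
Lemma local_of_nonunit_hyperideal : hyperideal hm nonunit -> hlocal hm.
Proof.
move=> Mideal.
have in_nonunit J : hyperideal hm J -> hproper J -> hsub J nonunit.
  by move=> HJ HJp x Jx ux; exact: (proper_hyperideal_no_unit HJ HJp ux Jx).
have Mproper : hproper nonunit by exists one; apply; exists one; exact: (hm_one HR).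
exists nonunit; split; first by split=> // J HJ HJp _; exact: in_nonunit.
move=> N [HN HNp Nmax] z; split; first exact: in_nonunit.
exact: (Nmax _ Mideal Mproper (in_nonunit N HN HNp)).
Qed.

Lemma nonunit_hyperideal (I : R -> Prop) (a : R) :
  hyperideal hm I -> hproper I -> ~ I a ->
  (forall c, nonunit c -> hsub (hm c a) I) -> hyperideal hm nonunit.
Proof.
move=> HI HIp aI annih; have [I0 Isub _ IC] := HI.
have unit_not_annih u : hunit hm one u -> ~ hsub (hm a u) I.
  by move=> uu auI; apply: aI; apply: (unit_cancel HI uu) => z /(hm_comm HR); exact: auI.
split.
- by move=> u0; exact: (proper_hyperideal_no_unit HI HIp u0 I0).
- move=> c d c_nu d_nu ucd; apply: (unit_not_annih _ ucd) => z.
  move/(hm_distr HR) => [p [q [ap [/(hm_oppr HR) amdq ->]]]].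
  rewrite -[q]opprK; apply: Isub.
  + by apply: (annih c c_nu); apply/(hm_comm HR).
  + by apply: (annih d d_nu); apply/(hm_comm HR).
- by move=> r x x_nu z rxz uz; apply: x_nu; exact: (unit_factor rxz uz).
- move=> r rs [z [prod_z z_nu]] w prod_w uw; apply: (unit_not_annih _ uw).
  have [t zat] := hm_nonempty HR z a.
  have prodaI : hsub (hprod hm r (rcons rs a)) I.
    by apply: IC; exists t; rewrite hprod_rcons; split;
      [exists z, a | exact: (annih z z_nu)].
  move=> s /(hm_comm HR) was; apply: prodaI; rewrite hprod_rcons.
  by exists w, a.
Qed.

Lemma not_primary_witness (I : R -> Prop) :
  ~ primary_cond hm I ->
  exists a b, [/\ hsub (hm a b) I, ~ I a & ~ hrad hm I b].
Proof.
move=> notprim; apply: NNPP => nowit; apply: notprim => x y xyI.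
case: (classic (I x)) => [|xI]; first by left.
case: (classic (hrad hm I y)) => [|yrad]; first by right.
by case: nowit; exists x, y.
Qed.

(* Indeed c o a o b lies in I, a and b are nonunits, and b is not in rad I. *)
Lemma one_absorbing_annihilation (I : R -> Prop) (a b : R) :
  one_absorbing_primary hm one I ->
  hsub (hm a b) I -> ~ I a -> ~ hrad hm I b ->
  forall c, nonunit c -> hsub (hm c a) I.
Proof.
move=> [HI _ absorb] abI aI brad c c_nu.
have bI : ~ I b by move=> Ib; apply: brad; exists 0%N => z ->.
have a_nu : nonunit a by move=> ua; exact: bI (unit_cancel HI ua abI).
have b_nu : nonunit b.
  by move=> ub; apply: aI; apply: (unit_cancel HI ub) => z /(hm_comm HR); exact: abI.
have cabI : hsub (hprod hm c [:: a; b]) I.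
  move=> z [w [_ [[_ [_ [-> [-> caw]]]] [-> wbz]]]].
  have : hsmul hm (hm c a) (hsing b) z by exists w, b.
  move/(hm_assoc HR c a b) => [_ [v [-> [abv cvz]]]].
  by have [_ _ Imul _] := HI; exact: (Imul c v (abI v abv)).
by case: (absorb c a b c_nu a_nu b_nu cabI).
Qed.

End MultiplicativeHyperring.

Theorem mainTheorem6 (R : zmodType) (hm : R -> R -> (R -> Prop)) (one : R)
  (HR : mhyperring hm one) (I : R -> Prop) :
  one_absorbing_primary hm one I ->
  ~ primary_cond hm I ->
  hlocal hm.
Proof.
move=> Iabs notprim.
have [a [b [abI aI brad]]] := not_primary_witness notprim.
have annih := one_absorbing_annihilation HR Iabs abI aI brad.
have [HI HIp _] := Iabs.
apply: (local_of_nonunit_hyperideal HR).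
exact: (nonunit_hyperideal HR HI HIp aI annih).
Qed.
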